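(* Let $n\ge 1$ and let $\overrightarrow{K_{1,n}}$ be an orientation of the star $K_{1,n}$ in which exactly $t$ of the $n$ leaves are sources, $0\le t\le n$. Then $\overrightarrow{K_{1,n}}$ is $\{1\}$-antimagic if and only if either $n=1$, or $n=2$ and $t=1$.
   Context: An oriented graph $\overrightarrow{G}$ is a directed graph obtained from a simple undirected graph by giving each edge one direction. For vertices $u,v$, $d(u,v)$ is the length of a shortest directed path from $u$ to $v$ ($d(u,u)=0$, and $d(u,v)=\infty$ if there is no such path). Let $\partial=\max\{d(u,v)<\infty : u,v\in V(\overrightarrow{G})\}$. A distance set is a nonempty $D\subseteq\{0,1,\dots,\partial\}$. The $D$-neighborhood of $u$ is $N_D(u)=\{v\in V(\overrightarrow{G}) : d(u,v)\in D\}$. For a bijection $f:V(\overrightarrow{G})\to\{1,\dots,|V(\overrightarrow{G})|\}$, the $D$-weight of $u$ is $\omega_D(u)=\sum_{v\in N_D(u)} f(v)$ (empty sum $=0$). $\overrightarrow{G}$ is $D$-antimagic if $D\subseteq\{0,\dots,\partial\}$ and there is such a bijection $f$ with all $D$-weights pairwise distinct. In an oriented star $\overrightarrow{K_{1,n}}$ the center is the vertex of degree $n$ and the leaves are the vertices of degree $1$; a leaf is a source if its arc points toward the center, and a sink otherwise. *)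

From mathcomp Require Import all_boot all_order.
Set Implicit Arguments. Unset Strict Implicit. Unset Printing Implicit Defensive.

Section OrientedGraphs.
Variable T : finType.

Definition oriented (a : rel T) : Prop :=
  irreflexive a /\ forall u v, a u v -> ~~ a v u.

Fixpoint reach (a : rel T) (k : nat) (u v : T) : bool :=
  if k is k'.+1 then [exists w, a u w && reach a k' w v] else u == v.

(* d(u,v): length of a shortest directed path, None = infinity.
   A shortest walk is a path, hence has length < #|T|. *)
Definition dist (a : rel T) (u v : T) : option nat :=
  let k := find (fun k => reach a k u v) (iota 0 #|T|) in
  if k < #|T| then Some k else None.

Definition diam (a : rel T) : nat :=
  \max_(u : T) \max_(v : T) (if dist a u v is Some k then k else 0).

Definition nbhD (a : rel T) (D : seq nat) (u : T) : {set T} :=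
  [set v | if dist a u v is Some k then k \in D else false].

(* D-weight for the labelling f (labels f v + 1 in {1..|V|}) *)
Definition weightD (a : rel T) (D : seq nat) (f : T -> 'I_#|T|) (u : T) : nat :=
  \sum_(v in nbhD a D u) (f v).+1.

Definition D_antimagic (a : rel T) (D : seq nat) : Prop :=
  [/\ D != [::], all (fun k => k <= diam a) D &
      exists f : T -> 'I_#|T|, bijective f /\ injective (weightD a D f)].
End OrientedGraphs.

(* Oriented star on 'I_n.+1: center ord0, leaves 1..n; leaves in S are
   sources (arc leaf -> center), the others are sinks (arc center -> leaf). *)
Definition star_arc (n : nat) (S : {set 'I_n.+1}) : rel 'I_n.+1 :=
  fun u v => ((u != ord0) && (v == ord0) && (u \in S))
          || ((u == ord0) && (v != ord0) && (v \notin S)).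

From mathcomp Require Import all_boot all_order zify.

(* In an oriented star the {1}-neighbourhood of a vertex is its out-neighbourhood:
   the set of sinks for the center, the center for a source, nothing for a sink.
   Two leaves of the same kind therefore have equal weights, so an antimagic
   labelling forces at most one source and at most one sink. Conversely, in that
   case distinct vertices have distinct neighbourhoods of at most one vertex, and
   any bijective labelling separates the weights, each of which is 0 or one more
   than a label. *)

Set Implicit Arguments.
Unset Strict Implicit.
Unset Printing Implicit Defensive.

Section Neighbourhood1.
Variable T : finType.
Implicit Types (a : rel T) (u v : T).

Lemma dist_eq1 a u v : (dist a u v == Some 1) = (u != v) && a u v.
Proof.
rewrite /dist; have [<-|neq_uv] := eqVneq u v.
  have : 0 < #|T| by apply/card_gt0P; exists u.
  by case: #|T| => //= m _; rewrite eqxx.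
have : 1 < #|T| by apply/card_gt1P; exists u, v.
case: #|T| => [|[|m]] // _ /=; rewrite (negbTE neq_uv) /=.
have -> : [exists w, a u w && (w == v)] = a u v.
  by apply/existsP/idP => [[w /andP[auw /eqP <-]] //|auv]; exists v; rewrite auv eqxx.
by case: (a u v) => //; case: ifP.
Qed.

Lemma in_nbhD1 a u v : irreflexive a -> (v \in nbhD a [:: 1] u) = a u v.
Proof.
move=> irr_a; have -> : (v \in nbhD a [:: 1] u) = (dist a u v == Some 1).
  by rewrite inE; case: (dist a u v) => // k; rewrite mem_seq1 -(inj_eq Some_inj).
by rewrite dist_eq1; have [<-|//] := eqVneq u v; rewrite irr_a.
Qed.

Lemma diam_ge1 a u v : u != v -> a u v -> 1 <= diam a.
Proof.
move=> neq_uv auv; apply: leq_trans (leq_bigmax u); apply: leq_trans (leq_bigmax v).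
by have /eqP -> : dist a u v == Some 1 by rewrite dist_eq1 neq_uv.
Qed.

End Neighbourhood1.

Section Weights.
Variable T : finType.
Implicit Types (A B : {set T}) (a : rel T) (D : seq nat) (f : T -> 'I_#|T|).

Lemma card_le1_cases A : #|A| <= 1 -> A = set0 \/ exists x, A = [set x].
Proof.
case: (posnP #|A|) => [/eqP|A_gt0 A_le1]; first by rewrite cards_eq0 => /eqP; left.
by right; apply/cards1P; rewrite eqn_leq A_le1.
Qed.

Lemma sum_succ_card_le1_inj (g : T -> nat) A B : injective g ->
  #|A| <= 1 -> #|B| <= 1 ->
  \sum_(v in A) (g v).+1 = \sum_(v in B) (g v).+1 -> A = B.
Proof.
move=> g_inj /card_le1_cases[->|[x ->]] /card_le1_cases[->|[y ->]] //;
  by rewrite ?big_set0 ?big_set1 // => -[] // /g_inj ->.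
Qed.

Lemma nbhD_inj a D f : injective (weightD a D f) -> injective (nbhD a D).
Proof. by move=> w_inj u v eq_nbh; apply: w_inj; rewrite /weightD eq_nbh. Qed.

Lemma weightD_inj a D f : injective f -> injective (nbhD a D) ->
  (forall u, #|nbhD a D u| <= 1) -> injective (weightD a D f).
Proof.
move=> f_inj nbh_inj nbh_le1 u v eq_w; apply: nbh_inj.
apply: sum_succ_card_le1_inj eq_w => //; exact: (inj_comp val_inj f_inj).
Qed.

End Weights.

Section Star.
Variables (n : nat) (S : {set 'I_n.+1}).
Hypothesis center_notin_S : ord0 \notin S.

Definition star_sinks : {set 'I_n.+1} := ~: (ord0 |: S).

Local Notation nbh1 := (nbhD (star_arc S) [:: 1]).

Lemma star_arc_irr : irreflexive (star_arc S).
Proof. by move=> u; rewrite /star_arc; case: (u == ord0); rewrite ?andbF. Qed.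

Lemma in_star_sinks v : (v \in star_sinks) = (v != ord0) && (v \notin S).
Proof. by rewrite !inE negb_or. Qed.

Lemma card_star_sinks : #|S| + #|star_sinks| = n.
Proof.
have := cardsC (ord0 |: S); rewrite cardsU1 center_notin_S card_ord.
by move=> /succn_inj.
Qed.

Lemma nbhD_star u : nbh1 u =
  if u == ord0 then star_sinks else if u \in S then [set ord0] else set0.
Proof.
apply/setP => v; rewrite in_nbhD1; last exact: star_arc_irr.
rewrite /star_arc; have [->|u0] := eqVneq u ord0; first by rewrite in_star_sinks.
by case: ifP => uS; rewrite !inE ?andbT ?andbF ?orbF.
Qed.

Lemma nbhD_star_center_leaf {v} : v != ord0 -> nbh1 ord0 != nbh1 v.
Proof.
move=> v0; rewrite !nbhD_star eqxx (negbTE v0); case: ifP => vS.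
  by apply/eqP => /setP/(_ ord0); rewrite in_star_sinks set11 eqxx.
by apply/set0Pn; exists v; rewrite in_star_sinks v0 vS.
Qed.

Lemma nbhD_star_injP :
  injective nbh1 <-> #|S| <= 1 /\ #|star_sinks| <= 1.
Proof.
have leaf_of u : u \in S -> u != ord0 by apply: contraTneq => ->.
split=> [nbh_inj|[/card_le1_eqP S_le1 /card_le1_eqP sinks_le1] u v].
  split; apply/card_le1_eqP => u v.
    move=> uS vS; apply: nbh_inj.
    by rewrite !nbhD_star (negbTE (leaf_of u uS)) (negbTE (leaf_of v vS)) uS vS.
  rewrite !in_star_sinks => /andP[u0 uS] /andP[v0 vS]; apply: nbh_inj.
  by rewrite !nbhD_star (negbTE u0) (negbTE v0) (negbTE uS) (negbTE vS).
have [->|u0] := eqVneq u ord0; have [->|v0] := eqVneq v ord0 => // eq_nbh.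
- by have := nbhD_star_center_leaf v0; rewrite eq_nbh eqxx.
- by have := nbhD_star_center_leaf u0; rewrite eq_nbh eqxx.
move: eq_nbh; rewrite !nbhD_star (negbTE u0) (negbTE v0).
case: ifPn => uS; case: ifPn => vS; first by move=> _; apply: S_le1.
- by move/setP/(_ ord0); rewrite !inE eqxx.
- by move/setP/(_ ord0); rewrite !inE eqxx.
by move=> _; apply: sinks_le1; rewrite in_star_sinks ?u0 ?v0.
Qed.

Lemma card_star_nbhD1_le1 u : #|star_sinks| <= 1 -> #|nbh1 u| <= 1.
Proof. by rewrite nbhD_star; case: ifP => // _; case: ifP; rewrite ?cards1 ?cards0. Qed.

Lemma diam_star_ge1 : 0 < n -> 1 <= diam (star_arc S).
Proof.
move=> n_gt0; pose l : 'I_n.+1 := Ordinal (n_gt0 : 1 < n.+1).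
have l0 : l != ord0 by [].
case lS: (l \in S); [apply: (@diam_ge1 _ _ l ord0) | apply: (@diam_ge1 _ _ ord0 l)];
  by rewrite // ?(eq_sym ord0) /star_arc ?lS ?l0.
Qed.

Lemma star_antimagic1P : 0 < n ->
  D_antimagic (star_arc S) [:: 1] <-> #|S| <= 1 /\ #|star_sinks| <= 1.
Proof.
move=> n_gt0; split=> [[_ _ [f [_ /nbhD_inj/nbhD_star_injP]]] //|cards_le1].
split=> //=; first by rewrite diam_star_ge1.
exists enum_rank; split; first exact: (Bijective enum_rankK enum_valK).
apply: weightD_inj; first exact: enum_rank_inj.
  exact/nbhD_star_injP.
by move=> u; apply: card_star_nbhD1_le1; case: cards_le1.
Qed.

End Star.

Theorem mainTheorem1 (n t : nat) (S : {set 'I_n.+1}) :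
  1 <= n -> ord0 \notin S -> #|S| = t ->
  (D_antimagic (star_arc S) [:: 1] <-> n = 1 \/ (n = 2 /\ t = 1)).
Proof.
move=> n_ge1 center_notin_S card_S.
have := card_star_sinks center_notin_S; rewrite star_antimagic1P // card_S.
by lia.
Qed.
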